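(* Let $\mathfrak A=(S_\Omega,S_{\mathcal E},\Omega,\mathcal E,B,u)$ be an accessible GPT fragment with $d_\Omega=\dim S_\Omega$ and $d_{\mathcal E}=\dim S_{\mathcal E}$. If $\mathfrak A$ admits a simplicial-cone embedding, then it admits a simplicial-cone embedding $(\Lambda,\tau_\Omega,\tau_{\mathcal E})$ with $|\Lambda|\le d_\Omega d_{\mathcal E}$. If moreover for every $e\in\mathcal E$ there exists $e^\perp\in\mathcal E$ with $e+e^\perp=u$, then $\mathfrak A$ admits a simplex embedding with at most $d_\Omega d_{\mathcal E}$ ontic states; in particular, when $S_\Omega=S_{\mathcal E}$ has dimension $d$, at most $d^2$ ontic states.
   Context: An accessible GPT fragment $\mathfrak A=(S_\Omega,S_{\mathcal E},\Omega,\mathcal E,B,u)$ consists of: finite-dimensional real vector spaces $S_\Omega$ and $S_{\mathcal E}$; a set $\Omega\subset S_\Omega$ of states which spans $S_\Omega$; a set $\mathcal E\subset S_{\mathcal E}^*$ of effects which spans $S_{\mathcal E}^*$; a bilinear form $B:S_{\mathcal E}^*\times S_\Omega\to\mathbb R$ (the probability rule); and a unit effect $u\in\mathcal E$. The convex hulls of $\Omega$ and $\mathcal E$ have finitely many extreme points. A simplicial-cone embedding of $\mathfrak A$ is a finite set $\Lambda$ (the ontic states) together with linear maps $\tau_\Omega:S_\Omega\to\mathbb R^\Lambda$ and $\tau_{\mathcal E}:S_{\mathcal E}^*\to\mathbb R^\Lambda$ such that $\tau_\Omega(s)$ is entrywise nonnegative for all $s\in\Omega$, $\tau_{\mathcal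 E}(e)$ is entrywise nonnegative for all $e\in\mathcal E$, and $B(w,v)=\tau_{\mathcal E}(w)\cdot\tau_\Omega(v)$ for all $w\in S_{\mathcal E}^*$, $v\in S_\Omega$. A simplex embedding is a simplicial-cone embedding which additionally satisfies $\tau_{\mathcal E}(u)=(1,1,\dots,1)$. *)

From HB Require Import structures.
From mathcomp Require Import all_boot all_order all_algebra.
From mathcomp Require Import reals.
Set Implicit Arguments. Unset Strict Implicit. Unset Printing Implicit Defensive.
Import Order.TTheory GRing.Theory Num.Theory.
Local Open Scope ring_scope.

Section GPT.
Variable R : realType.

Definition spans (V : vectType R) (A : V -> Prop) : Prop :=
  forall v : V, exists s : seq V, (forall x, x \in s -> A x) /\ (v \in <<s>>%VS).

Definition conv (V : vectType R) (A : V -> Prop) (x : V) : Prop :=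
  exists (k : nat) (p : 'I_k -> V) (t : 'I_k -> R),
    (forall i, A (p i)) /\ (forall i, 0 <= t i) /\ (\sum_i t i = 1) /\
    x = \sum_i t i *: p i.

Definition extreme_point (V : vectType R) (C : V -> Prop) (x : V) : Prop :=
  C x /\ forall (y z : V) (t : R), C y -> C z -> 0 < t -> t < 1 ->
    x = t *: y + (1 - t) *: z -> y = x /\ z = x.

Definition finitely_many_extreme_points (V : vectType R) (A : V -> Prop) : Prop :=
  exists s : seq V, forall x, extreme_point (conv A) x -> x \in s.

(* An accessible GPT fragment (S_Om, S_E, Om, E, B, u).  The type W plays the
   role of the dual space S_E^* (in which effects live); dim W = dim S_E. *)
Definition accessible_GPT_fragment (V W : vectType R)
    (Om : V -> Prop) (Ef : W -> Prop) (B : W -> V -> R) (u : W) : Prop :=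
  [/\ spans Om, spans Ef, Ef u,
      finitely_many_extreme_points Om &
      finitely_many_extreme_points Ef] /\
  ((forall (a : R) (w1 w2 : W) (v : V), B (a *: w1 + w2) v = a * B w1 v + B w2 v) /\
      (forall (a : R) (w : W) (v1 v2 : V), B w (a *: v1 + v2) = a * B w v1 + B w v2)).

(* simplicial-cone embedding with ontic state space Lambda = 'I_n,
   R^Lambda represented as row vectors 'rV[R]_n. *)
Definition simplicial_cone_embedding (V W : vectType R)
    (Om : V -> Prop) (Ef : W -> Prop) (B : W -> V -> R) (n : nat)
    (tO : {linear V -> 'rV[R]_n}) (tE : {linear W -> 'rV[R]_n}) : Prop :=
  [/\ (forall s, Om s -> forall i, 0 <= tO s 0 i),
      (forall e, Ef e -> forall i, 0 <= tE e 0 i) &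
      (forall (w : W) (v : V), B w v = \sum_(i < n) tE w 0 i * tO v 0 i)].

Definition simplex_embedding (V W : vectType R)
    (Om : V -> Prop) (Ef : W -> Prop) (B : W -> V -> R) (u : W) (n : nat)
    (tO : {linear V -> 'rV[R]_n}) (tE : {linear W -> 'rV[R]_n}) : Prop :=
  simplicial_cone_embedding Om Ef B tO tE /\ tE u = const_mx 1.

End GPT.

From HB Require Import structures.
From mathcomp Require Import all_boot all_order all_algebra.
From mathcomp Require Import reals ring.
Set Implicit Arguments. Unset Strict Implicit. Unset Printing Implicit Defensive.
Import Order.TTheory GRing.Theory Num.Theory.
Local Open Scope ring_scope.

(* An embedding writes B(w, v) as the sum over ontic states i of the
   rank-one forms tE(w)_i tO(v)_i, so B lies in the convex cone spanned by
   n points of the (dim S_E * dim S_Om)-dimensional space of bilinear forms.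
   By the conic Caratheodory theorem, at most dim S_E * dim S_Om of these
   points suffice, with nonnegative weights that can be absorbed into tO.
   For a simplex embedding, first discard the ontic states on which the unit
   effect vanishes (complementation makes them invisible to every effect) and
   rescale the others so that tE(u) = 1; the Caratheodory reduction then
   only deletes ontic states, keeping tE(u) = 1 on the remaining ones. *)

Definition row_support (R : nmodType) m (c : 'rV[R]_m) : {set 'I_m} :=
  [set i | c 0 i != 0].

Lemma row_supportP (R : nmodType) m (c : 'rV[R]_m) i :
  (i \in row_support c) = (c 0 i != 0).
Proof. by rewrite inE. Qed.

Section ConicCaratheodory.
Variables (R : realFieldType) (n N : nat) (A : 'M[R]_(n, N)).

Lemma dependent_rows_on (S : {set 'I_n}) : (N < #|S|)%N ->
  exists2 mu : 'rV[R]_n, mu *m A = 0 & mu != 0 /\ row_support mu \subset S.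
Proof.
move=> ltNS; pose f : 'I_#|S| -> 'I_n := enum_val.
have [y yA0 y_neq0] : exists2 y : 'rV_#|S|, y *m rowsub f A = 0 & y != 0.
  have : kermx (rowsub f A) != 0.
    by rewrite kermx_eq0 /row_free ltn_eqF // (leq_ltn_trans (rank_leq_col _)).
  by case/rowV0Pn=> y /sub_kermxP yA0 y_neq0; exists y.
pose P : 'M[R]_(#|S|, n) := rowsub f 1%:M.
have P_rinv : P *m colsub f 1%:M = 1%:M.
  rewrite -mxsub_mul mul1mx; apply/matrixP=> j k.
  by rewrite !mxE (inj_eq enum_val_inj).
exists (y *m P); first by rewrite -mulmxA mul_rowsub_mx mul1mx.
split.
  by apply: contraNneq y_neq0 => yP0; rewrite -[y]mulmx1 -P_rinv mulmxA yP0 mul0mx.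
apply/subsetP=> i; rewrite row_supportP; apply: contraR => iNS.
rewrite mxE big1 // => j _; rewrite !mxE.
by case: eqP => [fj_i|]; [move: iNS; rewrite -fj_i enum_valP | rewrite mulr0].
Qed.

Lemma conic_caratheodory_step (c : 'rV[R]_n) :
  (forall i, 0 <= c 0 i) -> (N < #|row_support c|)%N ->
  exists c2 : 'rV[R]_n, [/\ forall i, 0 <= c2 0 i, c2 *m A = c *m A &
    row_support c2 \proper row_support c].
Proof.
move=> c_ge0 ltN.
have [mu muA0 [/rV0Pn[i0 mu_i0] mu_supp]] := dependent_rows_on ltN.
have [nu [nuA0 nu_supp [i1 nu_i1]]] : exists nu : 'rV_n,
    [/\ nu *m A = 0, row_support nu \subset row_support c & exists i, 0 < nu 0 i].
  have [mu_gt0|mu_le0] := ltP 0 (mu 0 i0); first by exists mu; split; last exists i0.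
  exists (- mu); split; first by rewrite mulNmx muA0 oppr0.
    by apply: subset_trans mu_supp; apply/subsetP=> i; rewrite !row_supportP mxE oppr_eq0.
  by exists i0; rewrite mxE oppr_gt0 lt_neqAle mu_i0.
(* Move from c along -nu until the first coordinate of the support hits 0. *)
pose ratio i := c 0 i / nu 0 i.
have [i2 nu_i2 ratio_min] := @arg_minP _ R _ i1 (fun i => 0 < nu 0 i) ratio nu_i1.
pose c2 := c - ratio i2 *: nu.
have nu_off i : c 0 i = 0 -> nu 0 i = 0.
  move=> ci0; apply/eqP/negPn/negP; rewrite -row_supportP => /(subsetP nu_supp).
  by rewrite row_supportP ci0 eqxx.
exists c2; split.
- move=> i; rewrite !mxE subr_ge0.
  have [nu_i_gt0|nu_i_le0] := ltP 0 (nu 0 i).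
    by rewrite -ler_pdivlMr // ratio_min.
  by apply: le_trans (c_ge0 i); rewrite mulr_ge0_le0 // divr_ge0 // ltW.
- by rewrite mulmxBl -scalemxAl nuA0 scaler0 subr0.
- apply/properP; split.
    apply/subsetP=> i; rewrite !row_supportP; apply: contra => /eqP ci0.
    by rewrite !mxE ci0 nu_off // mulr0 subr0.
  exists i2; last by rewrite row_supportP !mxE mulfVK ?subrr ?eqxx // gt_eqF.
  by rewrite row_supportP; apply: contraTneq nu_i2 => /nu_off->; rewrite ltxx.
Qed.

Lemma conic_caratheodory (c : 'rV[R]_n) : (forall i, 0 <= c 0 i) ->
  exists c' : 'rV[R]_n, [/\ forall i, 0 <= c' 0 i, c' *m A = c *m A,
    (#|row_support c'| <= N)%N & row_support c' \subset row_support c].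
Proof.
move: {2}#|_| (leqnn #|row_support c|) => m; elim: m c => [|m IHm] c le_cm c_ge0.
  by exists c; split; rewrite // (leq_trans le_cm).
have [le_cN|ltN] := leqP #|row_support c| N; first by exists c.
have [c2 [c2_ge0 c2A c2_sub]] := conic_caratheodory_step c_ge0 ltN.
have [|c' [c'_ge0 c'A c'N c'_sub]] := IHm c2 _ c2_ge0.
  by rewrite -ltnS (leq_trans (proper_card c2_sub)).
exists c'; split; rewrite ?c'A //.
by apply: subset_trans c'_sub (proper_sub c2_sub).
Qed.

End ConicCaratheodory.

Section WeightedPairing.
Variables (R : realType) (V W : vectType R) (n : nat).
Variables (tO : {linear V -> 'rV[R]_n}) (tE : {linear W -> 'rV[R]_n}).

Let bV := vbasis (fullv : {vspace V}).
Let bW := vbasis (fullv : {vspace W}).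
Let dV := \dim (fullv : {vspace V}).
Let dW := \dim (fullv : {vspace W}).

Definition weighted_pairing (c : 'rV[R]_n) (w : W) (v : V) : R :=
  \sum_i c 0 i * (tE w 0 i * tO v 0 i).

Lemma linear_rV_coord (U : vectType R) (t : {linear U -> 'rV[R]_n}) x i :
  t x 0 i = \sum_a coord (vbasis fullv) a x * t (vbasis fullv)`_a 0 i.
Proof.
rewrite [in LHS](coord_vbasis (memvf x)) linear_sum summxE.
by apply: eq_bigr => a _; rewrite linearZ mxE.
Qed.

Lemma weighted_pairing_coord c w v : weighted_pairing c w v =
  \sum_a \sum_b coord bW a w * coord bV b v * weighted_pairing c bW`_a bV`_b.
Proof.
rewrite /weighted_pairing (eq_bigr (fun i => \sum_a \sum_b
    coord bW a w * coord bV b v * (c 0 i * (tE bW`_a 0 i * tO bV`_b 0 i)))).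
  rewrite exchange_big; apply: eq_bigr => a _; rewrite exchange_big.
  by apply: eq_bigr => b _; rewrite big_distrr.
move=> i _; rewrite linear_rV_coord [tO v 0 i]linear_rV_coord mulr_suml big_distrr.
apply: eq_bigr => a _; rewrite mulr_sumr big_distrr; apply: eq_bigr => b _ /=.
ring.
Qed.

Definition pairing_mx : 'M[R]_(n, dW * dV) :=
  \matrix_i mxvec (\matrix_(a, b) (tE bW`_a 0 i * tO bV`_b 0 i)).

Lemma pairing_mxE c a b :
  (c *m pairing_mx) 0 (mxvec_index a b) = weighted_pairing c bW`_a bV`_b.
Proof. by rewrite mxE; apply: eq_bigr => i _; rewrite mxE mxvecE mxE. Qed.

Lemma weighted_pairing_eq c c' : c *m pairing_mx = c' *m pairing_mx ->
  weighted_pairing c =2 weighted_pairing c'.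
Proof.
move=> eq_cc' w v; rewrite !weighted_pairing_coord.
by apply: eq_bigr => a _; apply: eq_bigr => b _; rewrite -!pairing_mxE eq_cc'.
Qed.

Lemma weighted_embedding_reduce (Om : V -> Prop) (Ef : W -> Prop)
    (B : W -> V -> R) (c : 'rV[R]_n) :
  (forall i, 0 <= c 0 i) ->
  (forall x, Om x -> forall i, 0 <= tO x 0 i) ->
  (forall e, Ef e -> forall i, 0 <= tE e 0 i) ->
  (forall w v, B w v = weighted_pairing c w v) ->
  exists k (f : 'I_k -> 'I_n) (tO' : {linear V -> 'rV[R]_k})
         (tE' : {linear W -> 'rV[R]_k}),
    [/\ simplicial_cone_embedding Om Ef B tO' tE', (k <= dV * dW)%N,
        forall j, c 0 (f j) != 0 & forall w j, tE' w 0 j = tE w 0 (f j)].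
Proof.
move=> c_ge0 tO_ge0 tE_ge0 B_c.
have [c' [c'_ge0 c'A c'_card c'_sub]] := conic_caratheodory pairing_mx c_ge0.
set S := row_support c' in c'_card c'_sub.
pose f : 'I_#|S| -> 'I_n := enum_val.
pose tO' := colsub f \o mulmxr (diag_mx c') \o tO.
pose tE' := colsub f \o tE.
have tO'E v j : tO' v 0 j = tO v 0 (f j) * c' 0 (f j).
  by rewrite /= mxE -[mulmxr _ _]/(tO v *m diag_mx c') mul_mx_diag mxE.
have tE'E w j : tE' w 0 j = tE w 0 (f j) by rewrite /= mxE.
exists #|S|, f, tO', tE'; split => //; first split.
- by move=> x Omx j; rewrite tO'E mulr_ge0 ?tO_ge0.
- by move=> e Efe j; rewrite tE'E tE_ge0.
- move=> w v; rewrite B_c -(weighted_pairing_eq c'A) /weighted_pairing.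
  rewrite (bigID (mem S)) /= [X in _ + X]big1 ?addr0; last first.
    by move=> i; rewrite row_supportP negbK => /eqP->; rewrite mul0r.
  by rewrite big_enum_val; apply: eq_bigr => j _; rewrite tO'E tE'E; ring.
- by rewrite mulnC.
- by move=> j; rewrite -row_supportP (subsetP c'_sub) ?enum_valP.
Qed.

End WeightedPairing.

Lemma complemented_effects_null_coord (R : realType) (W : vectType R) n
    (Ef : W -> Prop) (u : W) (tE : {linear W -> 'rV[R]_n}) i :
  spans Ef -> (forall e, Ef e -> forall i, 0 <= tE e 0 i) ->
  (forall e, Ef e -> exists ep, Ef ep /\ e + ep = u) ->
  tE u 0 i = 0 -> forall w, tE w 0 i = 0.
Proof.
move=> spanE tE_ge0 complE tEu0.
have tEe0 e : Ef e -> tE e 0 i = 0.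
  move=> Efe; have [ep [Efep u_e]] := complE e Efe.
  move/eqP: tEu0; rewrite -u_e linearD mxE paddr_eq0 ?tE_ge0 //.
  by case/andP=> /eqP.
move=> w; have [s [sE w_s]] := spanE w.
rewrite (@coord_span _ _ _ (in_tuple s) _ w_s) linear_sum summxE big1 // => j _.
by rewrite linearZ mxE tEe0 ?mulr0 //; apply/sE/mem_nth.
Qed.

Section EmbeddingReduction.
Variables (R : realType) (V W : vectType R).
Variables (Om : V -> Prop) (Ef : W -> Prop) (B : W -> V -> R).

Let dV := \dim (fullv : {vspace V}).
Let dW := \dim (fullv : {vspace W}).

Lemma cone_embedding_reduce n (tO : {linear V -> 'rV[R]_n})
    (tE : {linear W -> 'rV[R]_n}) :
  simplicial_cone_embedding Om Ef B tO tE ->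
  exists k (tO' : {linear V -> 'rV[R]_k}) (tE' : {linear W -> 'rV[R]_k}),
    simplicial_cone_embedding Om Ef B tO' tE' /\ (k <= dV * dW)%N.
Proof.
move=> [tO_ge0 tE_ge0 B_tO_tE].
have [||k [_ [tO' [tE' [emb le_k _ _]]]]] :=
  @weighted_embedding_reduce _ _ _ _ tO tE Om Ef B (const_mx 1) _ tO_ge0 tE_ge0.
- by move=> i; rewrite mxE ler01.
- by move=> w v; rewrite B_tO_tE; apply: eq_bigr => i _; rewrite mxE mul1r.
by exists k, tO', tE'.
Qed.

Lemma simplex_embedding_reduce (u : W) n (tO : {linear V -> 'rV[R]_n})
    (tE : {linear W -> 'rV[R]_n}) :
  spans Ef -> Ef u -> (forall e, Ef e -> exists ep, Ef ep /\ e + ep = u) ->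
  simplicial_cone_embedding Om Ef B tO tE ->
  exists k (tO' : {linear V -> 'rV[R]_k}) (tE' : {linear W -> 'rV[R]_k}),
    simplex_embedding Om Ef B u tO' tE' /\ (k <= dV * dW)%N.
Proof.
move=> spanE Efu complE [tO_ge0 tE_ge0 B_tO_tE].
pose d : 'rV[R]_n := \row_i (if 0 < tE u 0 i then tE u 0 i else 1).
have d_gt0 i : 0 < d 0 i by rewrite mxE; case: ifP.
pose tO2 := mulmxr (diag_mx d) \o tO.
pose tE2 := mulmxr (diag_mx (\row_i (d 0 i)^-1)) \o tE.
have tO2E v i : tO2 v 0 i = tO v 0 i * d 0 i.
  by rewrite /tO2 /= mul_mx_diag mxE.
have tE2E w i : tE2 w 0 i = tE w 0 i / d 0 i.
  by rewrite /tE2 /= mul_mx_diag !mxE.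
pose c : 'rV[R]_n := \row_i (if 0 < tE u 0 i then 1 else 0).
have [||||k [f [tO' [tE' [emb le_k c_f tE'E]]]]] :=
  @weighted_embedding_reduce _ _ _ _ tO2 tE2 Om Ef B c.
- by move=> i; rewrite mxE; case: ifP.
- by move=> x Omx i; rewrite tO2E mulr_ge0 ?tO_ge0 ?ltW.
- by move=> e Efe i; rewrite tE2E divr_ge0 ?tE_ge0 ?ltW.
- move=> w v; rewrite B_tO_tE; apply: eq_bigr => i _.
  rewrite tO2E tE2E mxE; have [tEu_gt0|tEu_le0] := ltP 0 (tE u 0 i).
    by rewrite mul1r mulrACA mulVf ?mulr1 // gt_eqF.
  have tEu0 : tE u 0 i = 0 by apply/le_anti; rewrite tEu_le0 tE_ge0.
  by rewrite (complemented_effects_null_coord spanE tE_ge0 complE tEu0) !mul0r.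
exists k, tO', tE'; split => //; split => //.
apply/matrixP=> a j; rewrite ord1 [RHS]mxE tE'E tE2E mxE.
move: (c_f j); rewrite mxE; case: ifP => [tEu_gt0 _|_]; last by rewrite eqxx.
by rewrite divff // gt_eqF.
Qed.

End EmbeddingReduction.

Theorem mainTheorem5 (R : realType) (V W : vectType R)
    (Om : V -> Prop) (Ef : W -> Prop) (B : W -> V -> R) (u : W) :
  accessible_GPT_fragment Om Ef B u ->
  (exists (n : nat) (tO : {linear V -> 'rV[R]_n}) (tE : {linear W -> 'rV[R]_n}),
      simplicial_cone_embedding Om Ef B tO tE) ->
  (exists (n : nat) (tO : {linear V -> 'rV[R]_n}) (tE : {linear W -> 'rV[R]_n}),
      simplicial_cone_embedding Om Ef B tO tE /\
      (n <= \dim (fullv : {vspace V}) * \dim (fullv : {vspace W}))%N) /\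
  ((forall e, Ef e -> exists ep, Ef ep /\ e + ep = u) ->
   exists (n : nat) (tO : {linear V -> 'rV[R]_n}) (tE : {linear W -> 'rV[R]_n}),
      simplex_embedding Om Ef B u tO tE /\
      (n <= \dim (fullv : {vspace V}) * \dim (fullv : {vspace W}))%N).
Proof.
move=> [[_ spanE Efu _ _] _] [n [tO [tE emb]]]; split.
  exact: cone_embedding_reduce emb.
by move=> complE; apply: simplex_embedding_reduce spanE Efu complE emb.
Qed.
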